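(* With $p_n=\Psi(P_n)$, $m_n=\Psi(M_n)$, $o_n=\Psi(O_n)$ for $n\ge1$ and $p_0=m_0=o_0=1$, the following hold for all $n\ge 3$: (i) $p_n=5p_{n-1}-4p_{n-2}+4p_{n-3}$, with $p_0=1$, $p_1=5$, $p_2=25$; (ii) $m_n=6m_{n-1}-3m_{n-2}+2m_{n-3}$, with $m_0=1$, $m_1=5$, $m_2=25$; (iii) $o_n=4o_{n-1}+4o_{n-2}+o_{n-3}$, with $o_0=1$, $o_1=5$, $o_2=25$.
   Context: A matching of a graph is a set of pairwise vertex-disjoint edges; it is maximal if it is not a proper subset of another matching. $\Psi(G)$ is the number of maximal matchings of $G$. A chain hexagonal cactus is a connected graph all of whose blocks are 6-cycles (hexagons), in which each hexagon has at most two cut-vertices and each cut-vertex lies in exactly two hexagons; its length is its number of hexagons. An internal hexagon (one with two cut-vertices) is ortho, meta or para if its two cut-vertices are at distance 1, 2 or 3 in the hexagon. $P_n$, $M_n$, $O_n$ are the chain hexagonal cacti of length $n$ whose internal hexagons are all para, all meta, resp. all ortho. *)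

From HB Require Import structures.
From mathcomp Require Import all_boot all_order all_algebra.
Set Implicit Arguments. Unset Strict Implicit. Unset Printing Implicit Defensive.

(* A simple graph on a finite vertex type T is given by an adjacency relation
   e (assumed symmetric and irreflexive in the instances used below). *)
Definition edges (T : finType) (e : rel T) : {set {set T}} :=
  [set A : {set T} | [exists x, exists y, [&& x != y, e x y & A == [set x; y]]]].

Definition is_matching (T : finType) (e : rel T) (M : {set {set T}}) : bool :=
  (M \subset edges e) && trivIset M.

Definition is_maximal_matching (T : finType) (e : rel T) (M : {set {set T}}) : bool :=
  is_matching e M &&
  [forall M' : {set {set T}}, is_matching e M' ==> ~~ (M \proper M')].

Definition Psi (T : finType) (e : rel T) : nat :=
  #|[set M : {set {set T}} | is_maximal_matching e M]|.

(* Hexagon k (k < n) has vertex set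
   {5k, 5k+1, ..., 5k+5}; consecutive hexagons k-1, k share the cut vertex 5k.
   [hexagon d k] lists hexagon k in cyclic order, the entry vertex 5k at
   position 0 and the exit vertex 5k+5 at position d, so the two (potential)
   cut vertices are at distance d in the hexagon:
   d = 1 ortho, d = 2 meta, d = 3 para. *)
Definition hexagon (d k : nat) : seq nat :=
  let b := (5 * k)%N in
  match d with
  | 1 => [:: b; b + 5; b + 1; b + 2; b + 3; b + 4]
  | 2 => [:: b; b + 1; b + 5; b + 2; b + 3; b + 4]
  | _ => [:: b; b + 1; b + 2; b + 5; b + 3; b + 4]
  end.

Definition cycle_adj (s : seq nat) (u v : nat) : bool :=
  (u \in s) && (v \in s) && ((next s u == v) || (next s v == u)).

Definition chain_adj (d n : nat) : rel 'I_((5 * n).+1) :=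
  fun u v => [exists k : 'I_n, cycle_adj (hexagon d k) u v].
Arguments chain_adj : clear implicits.

Definition P_adj (n : nat) := chain_adj 3 n.
Definition M_adj (n : nat) := chain_adj 2 n.
Definition O_adj (n : nat) := chain_adj 1 n.
Arguments P_adj : clear implicits.
Arguments M_adj : clear implicits.
Arguments O_adj : clear implicits.

Definition pseq (n : nat) : nat := if n is 0 then 1 else Psi (P_adj n).
Definition mseq (n : nat) : nat := if n is 0 then 1 else Psi (M_adj n).
Definition oseq (n : nat) : nat := if n is 0 then 1 else Psi (O_adj n).

From HB Require Import structures.
From mathcomp Require Import all_boot all_order all_algebra.
From mathcomp Require Import zify.
From Stdlib Require Import Btauto.
Set Implicit Arguments. Unset Strict Implicit. Unset Printing Implicit Defensive.

(* A set of edges of a chain of n hexagons is a word of n six-bit masks, one per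
   hexagon.  Whether it is a maximal matching can be decided hexagon by hexagon:
   all that has to cross a cut vertex is whether it is already covered by the
   previous hexagon, and whether the next hexagon has to cover it in order to
   dominate an edge of the previous one.  So Psi of a chain of length n counts the
   words of length n accepted by a four-state automaton, i.e. it is an entry of
   the n-th power of the transfer matrix of that automaton applied to the vector
   of accepting states.  The three transfer matrices are computed by evaluation;
   the fourth state is never entered, and the recurrences are the characteristic
   polynomials (Cayley-Hamilton) of the remaining 3x3 blocks. *)

(* A mask w < 64 is a set of edges of one hexagon: bit i of w selects edge i,
   joining the positions i and i + 1 (mod 6) of the list [hexagon d k], whose
   position 0 is the entry vertex and position d the exit vertex. *)
Definition bit (w i : nat) : bool := odd (w %/ 2 ^ i).
Definition succ6 (i : nat) : nat := i.+1 %% 6.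

Lemma succ6_lt i : succ6 i < 6.
Proof. by rewrite /succ6 ltn_pmod. Qed.

Definition edges_meet (i j : nat) : bool :=
  [|| i == j, i == succ6 j, succ6 i == j | succ6 i == succ6 j].
Definition at_entry (i : nat) : bool := (i == 0) || (succ6 i == 0).

Definition local_matching (w : nat) : bool :=
  all (fun i => all (fun j =>
    bit w i ==> bit w j ==> (i != j) ==> ~~ edges_meet i j) (iota 0 6)) (iota 0 6).
Definition covers_entry (w : nat) : bool := has (fun i => bit w i && at_entry i) (iota 0 6).
Definition dominated_within (w i : nat) : bool :=
  has (fun j => [&& bit w j, j != i & edges_meet i j]) (iota 0 6).
Definition dominated (c : bool) (w i : nat) : bool := dominated_within w i || (at_entry i && c).

Definition mask_of (b : nat -> bool) : nat := \sum_(0 <= i < 6) b i * 2 ^ i.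

Lemma mask_of_lt b : mask_of b < 64.
Proof.
by rewrite /mask_of unlock /=;
  case: (b 0); case: (b 1); case: (b 2); case: (b 3); case: (b 4); case: (b 5).
Qed.

Lemma bit_mask_of b j : j < 6 -> bit (mask_of b) j = b j.
Proof.
rewrite /mask_of unlock /=; case: j => [|[|[|[|[|[|//]]]]]] _;
by case: (b 0); case: (b 1); case: (b 2); case: (b 3); case: (b 4); case: (b 5).
Qed.

Lemma mask_of_bit w : w < 64 -> mask_of (bit w) = w.
Proof.
have all_masks : all (fun w => mask_of (bit w) == w) (iota 0 64).
  by rewrite /mask_of unlock; vm_compute.
by move=> w64; apply/eqP/(allP all_masks); rewrite mem_iota.
Qed.

(* The state (c, r) before a hexagon: c says that its entry vertex is covered by
   the previous hexagon, r that it has to be covered by this one. *)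
Definition state := (bool * bool)%type.
Definition states : seq state := [:: (false, false); (false, true); (true, false); (true, true)].

Lemma sum_states_eq (s : state) (F : state -> nat) :
  \sum_(t <- states) (s == t) * F t = F s.
Proof. by case: s => [[] []]; rewrite !big_cons big_nil /= ?mul0n ?mul1n ?addn0 ?add0n. Qed.

Section Automaton.
Variable d : nat.

Definition at_exit (i : nat) : bool := (i == d) || (succ6 i == d).
Definition covers_exit (w : nat) : bool := has (fun i => bit w i && at_exit i) (iota 0 6).

Definition admissible (c : bool) (w : nat) : bool :=
  local_matching w && all (fun i => [|| bit w i, at_exit i | dominated c w i]) (iota 0 6).
Definition needs_entry (c : bool) (w : nat) : bool :=
  has (fun i => [&& ~~ bit w i, at_exit i & ~~ dominated c w i]) (iota 0 6).

Definition step_ok (s : state) (w : nat) : bool :=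
  [&& admissible s.1 w, s.2 ==> covers_entry w & ~~ (s.1 && covers_entry w)].
Definition next_state (s : state) (w : nat) : state := (covers_exit w, needs_entry s.1 w).

Fixpoint accepts (s : state) (ws : seq nat) : bool :=
  if ws is w :: ws' then step_ok s w && accepts (next_state s w) ws' else ~~ s.2.

Definition seq_matching (ws : seq nat) : Prop :=
  (forall k, k < size ws -> local_matching (nth 0 ws k)) /\
  (forall k, k.+1 < size ws -> ~~ (covers_exit (nth 0 ws k) && covers_entry (nth 0 ws k.+1))).

Definition seq_dominating (c : bool) (ws : seq nat) : Prop :=
  forall k i, k < size ws -> i < 6 -> ~~ bit (nth 0 ws k) i ->
    dominated (if k is k'.+1 then covers_exit (nth 0 ws k') else c) (nth 0 ws k) i
    || [&& at_exit i, k.+1 < size ws & covers_entry (nth 0 ws k.+1)].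

Definition starts_covered (ws : seq nat) : bool := (0 < size ws) && covers_entry (nth 0 ws 0).

Lemma starts_covered_cons w ws : starts_covered (w :: ws) = covers_entry w.
Proof. by []. Qed.

Lemma seq_matching_cons w ws : seq_matching (w :: ws) <->
  [/\ local_matching w, ~~ (covers_exit w && starts_covered ws) & seq_matching ws].
Proof.
rewrite /starts_covered; split => [[lm nc]|[lw ncw [lm nc]]].
  split; [exact: (lm 0) | | split => k hk; [exact: (lm k.+1) | exact: (nc k.+1)]].
  by case: ws lm nc => [|w' ws] _ /=; [rewrite andbF | move/(_ 0 isT)].
split=> [[|k] //= /lm //|[|k] /= hk]; last exact: nc.
by rewrite ltnS in hk; move: ncw; rewrite hk.
Qed.

Lemma seq_dominating_cons c w ws : seq_dominating c (w :: ws) <->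
  (forall i, i < 6 -> ~~ bit w i -> dominated c w i || at_exit i && starts_covered ws)
  /\ seq_dominating (covers_exit w) ws.
Proof.
split=> [dom|[dom0 dom] [|k] i /= hk hi nb]; [|exact: dom0|].
- split=> [i hi nb|k i hk hi nb]; first exact: (dom 0 i).
  by have := dom k.+1 i hk hi nb; case: k hk nb.
- by case: k hk nb => [|k] hk nb; apply: dom.
Qed.

Lemma admissible_needs_entry c w (P : bool) :
  (all (fun i => [|| bit w i, at_exit i | dominated c w i]) (iota 0 6) && (needs_entry c w ==> P))
  <-> (forall i, i < 6 -> ~~ bit w i -> dominated c w i || at_exit i && P).
Proof.
split=> [/andP[/allP adm /implyP need] i hi nb|dom].
  have := adm i; rewrite mem_iota /= (negbTE nb) => /(_ hi) /=.
  case dm: (dominated c w i) => //=; rewrite orbF => ex; rewrite ex need //.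
  by apply/hasP; exists i; rewrite ?mem_iota ?nb ?ex ?dm.
apply/andP; split.
  apply/allP => i; rewrite mem_iota => /andP[_ hi].
  by case: (boolP (bit w i)) => //= /(dom i hi) /orP[->|/andP[-> _]]; rewrite ?orbT.
apply/implyP => /hasP[i]; rewrite mem_iota => /andP[_ hi] /and3P[nb _ ndom].
by have /orP[dm|/andP[_ ->]] := dom i hi nb; first by rewrite dm in ndom.
Qed.

Lemma acceptsP s ws : accepts s ws <->
  [/\ s.2 -> starts_covered ws, ~~ (s.1 && starts_covered ws),
      seq_matching ws & seq_dominating s.1 ws].
Proof.
elim: ws s => [|w ws IH] [c r] /=.
  rewrite /starts_covered /= andbF; split=> [/negbTE-> | [/implyP]]; last by case: r.
  by split.
rewrite /step_ok /admissible starts_covered_cons.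
split=> [/andP[/and3P[/andP[lm adm] ent nc] /IH[need ncov sm sd]]|[ent nc sm sd]].
  split=> //; [exact/implyP | exact/seq_matching_cons | apply/seq_dominating_cons].
  by split=> //; apply/(admissible_needs_entry c w); rewrite adm; exact/implyP.
case/seq_matching_cons: sm => lm ncov sm; case/seq_dominating_cons: sd => dom sd.
have /andP[adm need] := (admissible_needs_entry c w _).2 dom.
rewrite lm adm nc !andbT /=; apply/andP; split; first exact/implyP.
by apply/IH; split=> //; exact/implyP.
Qed.

End Automaton.

Definition word n (f : {ffun 'I_n -> 'I_64}) : seq nat := [seq val (f i) | i <- enum 'I_n].
Definition ffun_cons n (w : 'I_64) (g : {ffun 'I_n -> 'I_64}) : {ffun 'I_n.+1 -> 'I_64} :=
  [ffun i => if unlift ord0 i is Some j then g j else w].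

Lemma word_cons n w (g : {ffun 'I_n -> 'I_64}) : word (ffun_cons w g) = val w :: word g.
Proof.
rewrite /word enum_ordSl /= ffunE unlift_none; congr (_ :: _).
by rewrite -map_comp; apply: eq_map => j /=; rewrite ffunE liftK.
Qed.

Lemma size_word n (f : {ffun 'I_n -> 'I_64}) : size (word f) = n.
Proof. by rewrite /word size_map size_enum_ord. Qed.

Lemma nth_word n (f : {ffun 'I_n -> 'I_64}) (k : 'I_n) : nth 0 (word f) k = f k.
Proof. by rewrite /word (nth_map k) ?size_enum_ord // nth_ord_enum. Qed.

(* [sumn] and [count] rather than big operators keep [mat_pow] and [transfer]
   evaluable by [vm_compute]. *)
Fixpoint mat_pow (M : state -> state -> nat) (m : nat) (s t : state) : nat :=
  if m is m'.+1 then sumn [seq M s u * mat_pow M m' u t | u <- states] else s == t.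

Lemma mat_powS M m s t : mat_pow M m.+1 s t = \sum_(u <- states) M s u * mat_pow M m u t.
Proof.
rewrite -[LHS]/(sumn [seq M s u * mat_pow M m u t | u <- states]).
by rewrite sumnE big_map.
Qed.

Lemma eq_mat_pow M N : M =2 N -> forall m, mat_pow M m =2 mat_pow N m.
Proof.
move=> MN; elim=> [|m IHm] s t //.
by rewrite !mat_powS; apply: eq_bigr => u _; rewrite MN IHm.
Qed.

Definition matrix_of (rows : seq (seq nat)) (s t : state) : nat :=
  nth 0 (nth [::] rows (index s states)) (index t states).

Definition lin_comb (a : seq nat) (x : nat -> nat) : nat := \sum_(0 <= i < size a) nth 0 a i * x i.

Section TransferMatrix.
Variable d : nat.

Definition count_words n (s : state) : nat :=
  \sum_(f : {ffun 'I_n -> 'I_64}) accepts d s (word f).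

Definition transfer (s t : state) : nat :=
  count (fun w => step_ok d s w && (next_state d s w == t)) (iota 0 64).

Lemma count_words0 s : count_words 0 s = ~~ s.2.
Proof.
rewrite /count_words (eq_bigr (fun _ => nat_of_bool (~~ s.2))) => [|f _]; last first.
  by rewrite /word enum_ord0.
by rewrite sum_nat_const card_ffun !card_ord expn0 mul1n.
Qed.

Lemma count_wordsS n s :
  count_words n.+1 s = \sum_(w < 64) step_ok d s w * count_words n (next_state d s w).
Proof.
rewrite /count_words (reindex (fun p : 'I_64 * {ffun 'I_n -> 'I_64} => ffun_cons p.1 p.2)) /=.
  rewrite -(pair_bigA _ (fun w g => nat_of_bool (accepts d s (word (ffun_cons w g))))) /=.
  apply: eq_bigr => w _; rewrite big_distrr /=; apply: eq_bigr => g _.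
  by rewrite word_cons /= mulnb.
exists (fun f : {ffun 'I_n.+1 -> 'I_64} => (f ord0, [ffun j => f (lift ord0 j)])).
  move=> [w g] _ /=; congr (_, _); first by rewrite ffunE unlift_none.
  by apply/ffunP => j; rewrite !ffunE liftK.
move=> f _; apply/ffunP => i; rewrite !ffunE.
by case: (unliftP ord0 i) => [j ->|->]; rewrite ?ffunE.
Qed.

Lemma count_words_step n s :
  count_words n.+1 s = \sum_(t <- states) transfer s t * count_words n t.
Proof.
have transferE t : transfer s t = \sum_(w < 64) (step_ok d s w && (next_state d s w == t)).
  by rewrite /transfer -sumn_count sumnE big_map -[iota 0 64]/(index_iota 0 64) big_mkord.
under eq_bigr do rewrite transferE big_distrl /=.
rewrite exchange_big count_wordsS; apply: eq_bigr => w _.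
by under eq_bigr do rewrite -mulnb -mulnA; rewrite -big_distrr sum_states_eq.
Qed.

Lemma count_words_add m n s :
  count_words (m + n) s = \sum_(t <- states) mat_pow transfer m s t * count_words n t.
Proof.
elim: m s => [|m IHm] s; first by rewrite sum_states_eq.
rewrite addSn count_words_step.
under eq_bigr do rewrite IHm big_distrr /=.
under [RHS]eq_bigr do rewrite mat_powS big_distrl /=.
rewrite exchange_big; apply: eq_bigr => u _; apply: eq_bigr => t _.
by rewrite mulnA.
Qed.

Lemma count_words_pow (M : state -> state -> nat) m s : transfer =2 M ->
  count_words m s = \sum_(t <- states) mat_pow M m s t * ~~ t.2.
Proof.
move=> TM; rewrite -[m]addn0 count_words_add addn0; apply: eq_bigr => t _.
by rewrite count_words0 (eq_mat_pow TM).
Qed.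

Lemma count_words_recurrence (M : state -> state -> nat) (a b : seq nat) s :
  transfer =2 M ->
  (forall t, lin_comb a (fun i => mat_pow M i s t) = lin_comb b (fun i => mat_pow M i s t)) ->
  forall n, lin_comb a (fun i => count_words (i + n) s)
          = lin_comb b (fun i => count_words (i + n) s).
Proof.
move=> TM coef n; rewrite /lin_comb.
under eq_bigr do rewrite count_words_add big_distrr /=.
under [RHS]eq_bigr do rewrite count_words_add big_distrr /=.
rewrite exchange_big [RHS]exchange_big; apply: eq_bigr => t _.
under eq_bigr do rewrite mulnA (eq_mat_pow TM).
under [RHS]eq_bigr do rewrite mulnA (eq_mat_pow TM).
by rewrite -!big_distrl /=; congr (_ * _); apply: coef.
Qed.

End TransferMatrix.

Lemma disjoint_set2 (T : finType) (a b : T) (B : {set T}) :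
  [disjoint [set a; b] & B] = (a \notin B) && (b \notin B).
Proof.
rewrite (@eq_disjoint _ _ (predU1 a (pred1 b))) => [|x]; last by rewrite !inE.
by rewrite disjointU1 disjoint1.
Qed.

Lemma set0_notin_edges (T : finType) (e : rel T) : set0 \notin edges e.
Proof.
apply/negP; rewrite inE => /existsP[x /existsP[y /and3P[_ _ /eqP xy]]].
by have := set21 x y; rewrite -xy inE.
Qed.

Lemma maximal_matchingE (T : finType) (e : rel T) (M : {set {set T}}) : is_matching e M ->
  is_maximal_matching e M =
  [forall A in edges e, (A \notin M) ==> [exists B in M, ~~ [disjoint A & B]]].
Proof.
move=> mM; rewrite /is_maximal_matching mM /=; case/andP: mM => sM tM.
apply/forallP/forallP => [maxM A|dom M'].
  apply/implyP => eA; apply/implyP => nAM; apply: contraT => free.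
  have disjA : {in M, forall B : {set T}, [disjoint A & B]}.
    by move=> B BM; apply: contraT => nd; case/negP: free; apply/existsP; exists B; rewrite BM.
  have n0M : set0 \notin M by apply/negP => /(subsetP sM); rewrite (negbTE (set0_notin_edges e)).
  have [tAM _] := trivIsetU1 disjA tM n0M.
  have := maxM (A |: M); rewrite /is_matching subUset sub1set eA sM tAM /=.
  by rewrite properE subsetUr /=; case/negP; apply/subsetPn; exists A; rewrite ?setU11.
apply/implyP => /andP[sM' tM']; apply/negP => /properP[sMM' [A AM' nAM]].
have := dom A; rewrite (subsetP sM' A AM') nAM /= => /existsP[B /andP[BM nd]].
move/trivIsetP: tM' => /(_ A B AM' (subsetP sMM' B BM)).
have -> : A != B by apply: contraNneq nAM => ->.
by move=> /(_ isT); apply/negP.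
Qed.

Section HexagonGeometry.
Variable d : nat.
Hypothesis d_range : [|| d == 1, d == 2 | d == 3].

Definition hex_pos (j : nat) : nat := nth 0 (hexagon d 0) j.

Lemma hexagon_shift k : hexagon d k = [seq 5 * k + x | x <- hexagon d 0].
Proof. by case/or3P: d_range => /eqP ->; rewrite /hexagon /= muln0 !add0n addn0. Qed.

Lemma hexagon0_uniq : uniq (hexagon d 0).
Proof. by case/or3P: d_range => /eqP ->. Qed.

Lemma exit_lt6 : d < 6.
Proof. by case/or3P: d_range => /eqP ->. Qed.

Lemma hex_pos_le j : j < 6 -> hex_pos j <= 5.
Proof. by rewrite /hex_pos; case/or3P: d_range => /eqP ->; case: j => [|[|[|[|[|[|]]]]]]. Qed.

Lemma hex_pos_inj a b : a < 6 -> b < 6 -> (hex_pos a == hex_pos b) = (a == b).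
Proof.
rewrite /hex_pos; case/or3P: d_range => /eqP ->;
by case: a => [|[|[|[|[|[|]]]]]]; case: b => [|[|[|[|[|[|]]]]]].
Qed.

Lemma hex_pos_eq5 a : a < 6 -> (hex_pos a == 5) = (a == d).
Proof. by rewrite /hex_pos; case/or3P: d_range => /eqP ->; case: a => [|[|[|[|[|[|]]]]]]. Qed.

Lemma hex_pos_eq0 a : a < 6 -> (hex_pos a == 0) = (a == 0).
Proof. by rewrite /hex_pos; case/or3P: d_range => /eqP ->; case: a => [|[|[|[|[|[|]]]]]]. Qed.

Definition hex_adj (b u v : nat) : bool :=
  has (fun i => ((u == b + hex_pos i) && (v == b + hex_pos (succ6 i)))
             || ((v == b + hex_pos i) && (u == b + hex_pos (succ6 i)))) (iota 0 6).

Lemma cycle_adj_hexagon0 u v : cycle_adj (hexagon d 0) u v = hex_adj 0 u v.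
Proof.
rewrite /cycle_adj /hex_adj /hex_pos; case/or3P: d_range => /eqP ->;
by case: u => [|[|[|[|[|[|u]]]]]]; case: v => [|[|[|[|[|[|v]]]]]].
Qed.

Lemma cycle_adj_shift b u v : cycle_adj [seq b + x | x <- hexagon d 0] u v = hex_adj b u v.
Proof.
have [hu|hu] := leqP b u; last first.
  rewrite /cycle_adj (_ : u \in _ = false) ?andFb; last first.
    by apply/negbTE/mapP => -[x _ ?]; lia.
  by symmetry; apply/negbTE/hasPn => i _; rewrite !(ltn_eqF (leq_trans hu (leq_addr _ _))) andbF.
have [hv|hv] := leqP b v; last first.
  rewrite /cycle_adj (_ : v \in _ = false) ?andbF ?andFb; last first.
    by apply/negbTE/mapP => -[x _ ?]; lia.
  by symmetry; apply/negbTE/hasPn => i _; rewrite !(ltn_eqF (leq_trans hv (leq_addr _ _))) andbF.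
rewrite -(subnKC hu) -(subnKC hv) /cycle_adj !(mem_map (@addnI b)).
rewrite !(next_map (@addnI b)) ?hexagon0_uniq // !eqn_add2l.
by rewrite -/(cycle_adj _ _ _) cycle_adj_hexagon0; apply: eq_has => i; rewrite !eqn_add2l.
Qed.

Variable n : nat.

Definition vtx (k j : nat) : 'I_(5 * n).+1 := inord (5 * k + hex_pos j).

Lemma vtx_val k j : k < n -> j < 6 -> (vtx k j : nat) = 5 * k + hex_pos j.
Proof. by move=> hk hj; rewrite /vtx inordK //; have := hex_pos_le hj; lia. Qed.

Lemma chain_adjE (u v : 'I_(5 * n).+1) : chain_adj d n u v =
  [exists k : 'I_n, has (fun i => ((u == vtx k i) && (v == vtx k (succ6 i)))
                               || ((v == vtx k i) && (u == vtx k (succ6 i)))) (iota 0 6)].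
Proof.
apply: eq_existsb => k; rewrite hexagon_shift cycle_adj_shift.
apply: eq_in_has => i; rewrite mem_iota => /andP[_ hi].
by rewrite -!(inj_eq val_inj) /= !vtx_val ?succ6_lt.
Qed.

(* Only the cut vertex 5(k+1) has two names: exit of hexagon k and entry of hexagon k+1. *)
Definition same_vertex (k a k' b : nat) : bool :=
  [|| (k == k') && (a == b), [&& k' == k.+1, a == d & b == 0] | [&& k == k'.+1, a == 0 & b == d]].

Lemma vtx_eq k k' a b : k < n -> k' < n -> a < 6 -> b < 6 ->
  (vtx k a == vtx k' b) = same_vertex k a k' b.
Proof.
move=> hk hk' ha hb; rewrite -(inj_eq val_inj) /= !vtx_val //.
have la := hex_pos_le ha; have lb := hex_pos_le hb.
rewrite /same_vertex -(hex_pos_inj ha hb) -(hex_pos_eq5 ha) -(hex_pos_eq0 hb).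
rewrite -(hex_pos_eq0 ha) -(hex_pos_eq5 hb).
apply/eqP/idP => [|/or3P[/andP[/eqP-> /eqP->]|/and3P[/eqP-> /eqP-> /eqP->]|
                          /and3P[/eqP-> /eqP-> /eqP->]]]; lia.
Qed.

Definition hex_edge (p : 'I_n * 'I_6) : {set 'I_(5 * n).+1} :=
  [set vtx p.1 p.2; vtx p.1 (succ6 p.2)].

Lemma edges_chain : edges (chain_adj d n) = [set hex_edge p | p : 'I_n * 'I_6].
Proof.
apply/setP => A; rewrite inE; apply/existsP/imsetP.
  move=> [x /existsP[y /and3P[nxy exy /eqP ->]]].
  move: exy; rewrite chain_adjE => /existsP[k /hasP[i]]; rewrite mem_iota => /andP[_ hi].
  by case/orP => /andP[/eqP-> /eqP->]; exists (k, Ordinal hi); rewrite // /hex_edge /= setUC.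
move=> [[k i] _ ->]; exists (vtx k i); apply/existsP; exists (vtx k (succ6 i)).
rewrite eqxx andbT; apply/andP; split.
  by rewrite vtx_eq ?succ6_lt //; apply/negP; rewrite /same_vertex /succ6; have := ltn_ord i; lia.
rewrite chain_adjE; apply/existsP; exists k; apply/hasP; exists (val i).
  by rewrite mem_iota /=.
by rewrite !eqxx.
Qed.

Lemma hex_edge_inj : injective hex_edge.
Proof.
move=> [k i] [k' i'] eq_edge.
have h1 : vtx k i \in hex_edge (k', i') by rewrite -eq_edge !inE eqxx.
have h2 : vtx k (succ6 i) \in hex_edge (k', i') by rewrite -eq_edge !inE eqxx orbT.
move: h1 h2; rewrite !inE /= !vtx_eq ?succ6_lt // /same_vertex /succ6 => h1 h2.
have := ltn_ord i; have := ltn_ord i'; have := exit_lt6 => *.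
have [ek ei] : (k : nat) = k' /\ (i : nat) = i' by lia.
by congr (_, _); apply: val_inj.
Qed.

Lemma hex_edges_meet (p q : 'I_n * 'I_6) : ~~ [disjoint hex_edge p & hex_edge q] =
  [|| (p.1 == q.1 :> nat) && edges_meet p.2 q.2,
      [&& q.1 == p.1.+1 :> nat, at_exit d p.2 & at_entry q.2] |
      [&& p.1 == q.1.+1 :> nat, at_entry p.2 & at_exit d q.2]].
Proof.
case: p q => [k i] [k' i'] /=.
rewrite /hex_edge /= disjoint_set2 !inE !vtx_eq ?succ6_lt // negb_and !negbK.
rewrite /same_vertex /edges_meet /at_exit /at_entry.
btauto.
Qed.
End HexagonGeometry.

Section Correspondence.
Variable d : nat.
Hypothesis d_range : [|| d == 1, d == 2 | d == 3].
Variable n : nat.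
Implicit Type f : {ffun 'I_n -> 'I_64}.

Definition chosen f (p : 'I_n * 'I_6) : bool := bit (f p.1) p.2.

Definition edge_set f : {set {set 'I_(5 * n).+1}} := @hex_edge d n @: [set p | chosen f p].

Lemma mem_edge_set f p : (hex_edge d p \in edge_set f) = chosen f p.
Proof. by rewrite mem_imset ?inE //; exact: hex_edge_inj. Qed.

Lemma edge_set_sub f : edge_set f \subset edges (chain_adj d n).
Proof. by rewrite edges_chain //; apply/subsetP => A /imsetP[p _ ->]; apply: imset_f. Qed.

Lemma edge_set_inj : injective edge_set.
Proof.
move=> f f' eq_f; apply/ffunP => k; apply: ord_inj.
rewrite -(mask_of_bit (ltn_ord (f k))) -(mask_of_bit (ltn_ord (f' k))).
apply: eq_big_nat => i /andP[_ hi].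
by rewrite -[bit _ i]/(chosen f (k, Ordinal hi)) -mem_edge_set eq_f mem_edge_set.
Qed.

Lemma edge_set_onto (M : {set {set 'I_(5 * n).+1}}) :
  M \subset edges (chain_adj d n) -> exists f, M = edge_set f.
Proof.
move=> sM; pose b (k : 'I_n) (i : nat) := hex_edge d (k, inord i) \in M.
exists [ffun k => Ordinal (mask_of_lt (b k))].
apply/setP => A; apply/idP/imsetP => [AM|[p]].
  move: (subsetP sM A AM); rewrite edges_chain // => /imsetP[[k i] _ eA].
  by exists (k, i); rewrite // inE /chosen ffunE /= bit_mask_of // /b inord_val -eA.
by rewrite inE /chosen ffunE /= bit_mask_of // /b inord_val -surjective_pairing => pM ->.
Qed.

Lemma trivIset_edge_set f : trivIset (edge_set f) <->
  (forall p q, chosen f p -> chosen f q -> p != q -> [disjoint hex_edge d p & hex_edge d q]).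
Proof.
split=> [/trivIsetP tr p q fp fq npq|disj].
  by apply: tr; rewrite ?mem_edge_set // (inj_eq (@hex_edge_inj d d_range n)).
apply/trivIsetP => A B /imsetP[p fp ->] /imsetP[q fq ->] npq.
by rewrite !inE in fp fq; apply: disj => //; apply: contra_neq npq => ->.
Qed.

Lemma maximal_edge_set f : trivIset (edge_set f) ->
  is_maximal_matching (chain_adj d n) (edge_set f) <->
  (forall q, ~~ chosen f q -> exists2 p, chosen f p & ~~ [disjoint hex_edge d q & hex_edge d p]).
Proof.
move=> tr; rewrite maximal_matchingE /is_matching ?edge_set_sub //.
split=> [/forallP dom q nq|dom].
  have := dom (hex_edge d q); rewrite edges_chain // imset_f // mem_edge_set nq /=.
  by case/existsP=> B /andP[/imsetP[p fp ->] nd]; exists p; rewrite // inE in fp.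
apply/forallP => A; apply/implyP; rewrite edges_chain // => /imsetP[q _ ->].
apply/implyP; rewrite mem_edge_set => nq; have [p fp nd] := dom q nq.
by apply/existsP; exists (hex_edge d p); rewrite mem_edge_set fp.
Qed.

Lemma has_chosen f (k : 'I_n) (P : pred nat) :
  has (fun i => bit (f k) i && P i) (iota 0 6) = [exists i : 'I_6, chosen f (k, i) && P i].
Proof.
apply/hasP/existsP => [[i]|[i /andP[fi Pi]]].
  by rewrite mem_iota => /andP[_ hi] fPi; exists (Ordinal hi); exact: fPi.
by exists (val i); [rewrite mem_iota /= | apply/andP].
Qed.

Lemma pairwise_disjoint_word f :
  (forall p q, chosen f p -> chosen f q -> p != q -> [disjoint hex_edge d p & hex_edge d q])
  <-> seq_matching d (word f).
Proof.
rewrite /seq_matching size_word; split=> [disj|[lm nc]].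
  split=> [k hk|k hk].
    rewrite (nth_word f (Ordinal hk)); apply/allP => i; rewrite mem_iota => /andP[_ hi].
    apply/allP => j; rewrite mem_iota => /andP[_ hj]; apply/implyP => fi; apply/implyP => fj.
    apply/implyP => nij; have := disj (Ordinal hk, Ordinal hi) (Ordinal hk, Ordinal hj) fi fj.
    rewrite xpair_eqE eqxx /= => /(_ nij) /negPn.
    by rewrite hex_edges_meet //= eqxx /= negb_or => /andP[].
  have hk' : k < n by apply: ltnW.
  rewrite (nth_word f (Ordinal hk)) (nth_word f (Ordinal hk')).
  rewrite /covers_exit /covers_entry !has_chosen.
  apply/negP => /andP[/existsP[i /andP[fi ei]] /existsP[j /andP[fj ej]]].
  have := disj (Ordinal hk', i) (Ordinal hk, j) fi fj.
  rewrite xpair_eqE /= -(inj_eq val_inj) /= eqn_leq ltnn andbF /= => /(_ isT) /negPn.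
  by rewrite hex_edges_meet //= eqxx ei ej /= orbT.
have cut_free (k k' : 'I_n) i i' : k' = k.+1 :> nat -> chosen f (k, i) -> chosen f (k', i') ->
    at_exit d i -> at_entry i' -> False.
  move=> e fi fi' ei ei'; have hk1 : k.+1 < n by rewrite -e.
  have := nc k hk1; rewrite (nth_word f k) (nth_word f (Ordinal hk1)).
  rewrite /covers_exit /covers_entry !has_chosen.
  rewrite (_ : Ordinal hk1 = k'); last exact: val_inj.
  by case/negP; apply/andP; split; apply/existsP; [exists i | exists i']; apply/andP.
move=> [k i] [k' i'] /= fi fi' npq; apply/negPn/negP; rewrite hex_edges_meet //=.
case/or3P=> [/andP[/eqP ek meet]|/and3P[/eqP e ei ei']|/and3P[/eqP e ei ei']].
- have ek' : k = k' by apply: val_inj.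
  subst k'; move: fi fi'; rewrite /chosen /= => fi fi'.
  have /allP lmk := lm k (ltn_ord k); rewrite (nth_word f k) in lmk.
  have := lmk i; rewrite mem_iota ltn_ord => /(_ isT) /allP /(_ i').
  rewrite mem_iota ltn_ord fi fi' meet implybF /= => /(_ isT) /negbNE.
  by move/eqP/ord_inj => eii; move: npq; rewrite eii eqxx.
- exact: (cut_free k k' i i').
- exact: (cut_free k' k i' i).
Qed.

Lemma dominating_word f :
  (forall q, ~~ chosen f q -> exists2 p, chosen f p & ~~ [disjoint hex_edge d q & hex_edge d p])
  <-> seq_dominating d false (word f).
Proof.
rewrite /seq_dominating size_word; split=> [dom k i hk hi|dom [k i] /= nfi].
  rewrite (nth_word f (Ordinal hk)) /dominated -orbA => nfi.
  have [[k' j] fj] := dom (Ordinal hk, Ordinal hi) nfi.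
  rewrite hex_edges_meet //= => /or3P[/andP[/eqP e meet]|/and3P[/eqP e ei ej]|/and3P[/eqP e ei ej]].
  - have ek : Ordinal hk = k' by apply: val_inj.
    apply/orP; left; apply/hasP; exists (val j); first by rewrite mem_iota /=.
    rewrite ek meet andbT; apply/andP; split; first exact: fj.
    by apply: contra nfi => /eqP <-; rewrite ek; exact: fj.
  - have hk1 : k.+1 < n by rewrite -e.
    have ce : covers_entry (f (Ordinal hk1)).
      rewrite /covers_entry has_chosen; apply/existsP; exists j.
      by rewrite (_ : Ordinal hk1 = k') ?ej ?andbT //; exact: val_inj.
    by rewrite ei hk1 (nth_word f (Ordinal hk1)) ce !orbT.
  - subst k; have ce : covers_exit d (f k').
      by rewrite /covers_exit has_chosen; apply/existsP; exists j; rewrite ej andbT.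
    by rewrite ei (nth_word f k') ce orbT.
have := dom k i (ltn_ord k) (ltn_ord i); rewrite (nth_word f k) /dominated -orbA => /(_ nfi).
case/or3P=> [/hasP[j]|/andP[ei]|/and3P[ei hk1]].
- rewrite mem_iota /= => hj /and3P[fj _ meet].
  by exists (k, Ordinal hj); rewrite // hex_edges_meet //= eqxx meet.
- case: k nfi => [[|k] hk] //= nfi; have hk' : k < n by apply: ltnW.
  rewrite (nth_word f (Ordinal hk')) /covers_exit has_chosen => /existsP[j /andP[fj ej]].
  by exists (Ordinal hk', j); rewrite // hex_edges_meet //= eqxx ei ej !orbT.
rewrite (nth_word f (Ordinal hk1)) /covers_entry has_chosen => /existsP[j /andP[fj ej]].
by exists (Ordinal hk1, j); rewrite // hex_edges_meet //= eqxx ei ej !orbT.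
Qed.

Lemma maximal_edge_set_accepts f :
  is_maximal_matching (chain_adj d n) (edge_set f) = accepts d (false, false) (word f).
Proof.
have acceptsE : accepts d (false, false) (word f) <->
    seq_matching d (word f) /\ seq_dominating d false (word f).
  by rewrite acceptsP; split=> [[]|[]].
apply/idP/idP => [maxM|/acceptsE[/pairwise_disjoint_word sm /dominating_word sd]].
  have tr : trivIset (edge_set f) by case/andP: maxM => /andP[].
  apply/acceptsE; split; first exact/pairwise_disjoint_word/trivIset_edge_set.
  exact/dominating_word/maximal_edge_set.
have tr : trivIset (edge_set f) by apply/trivIset_edge_set.
exact/(maximal_edge_set tr).
Qed.

Lemma Psi_chain : Psi (chain_adj d n) = count_words d n (false, false).
Proof.
rewrite /Psi; have -> : [set M | is_maximal_matching (chain_adj d n) M] =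
          edge_set @: [set f | accepts d (false, false) (word f)].
  apply/setP => M; rewrite inE; apply/idP/imsetP => [maxM|[f]].
    have [sM _] := andP (proj1 (andP maxM)); have [f eM] := edge_set_onto sM.
    by exists f; rewrite // inE -maximal_edge_set_accepts -eM.
  by rewrite inE -maximal_edge_set_accepts => accf ->.
rewrite card_imset; last exact: edge_set_inj.
rewrite cardE -sum1_size big_filter big_mkcond /=.
by apply: eq_bigr => f _; rewrite inE; case: accepts.
Qed.

End Correspondence.
Lemma chain_count d n : [|| d == 1, d == 2 | d == 3] ->
  (if n is 0 then 1 else Psi (chain_adj d n)) = count_words d n (false, false).
Proof. by case: n => [|n] d_range; [rewrite count_words0 | exact: Psi_chain]. Qed.

(* Rows and columns in the order of [states]. *)
Definition para_transfer :=
  matrix_of [:: [:: 1; 2; 4; 0]; [:: 0; 2; 4; 0]; [:: 1; 0; 2; 0]; [:: 0; 0; 0; 0]].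
Definition meta_transfer :=
  matrix_of [:: [:: 1; 2; 4; 0]; [:: 1; 2; 3; 0]; [:: 0; 2; 3; 0]; [:: 0; 0; 0; 0]].
Definition ortho_transfer :=
  matrix_of [:: [:: 1; 2; 4; 0]; [:: 1; 1; 3; 0]; [:: 1; 1; 2; 0]; [:: 0; 0; 0; 0]].

Lemma transfer_para : transfer 3 =2 para_transfer.
Proof. by move=> [[] []] [[] []]; vm_compute. Qed.

Lemma transfer_meta : transfer 2 =2 meta_transfer.
Proof. by move=> [[] []] [[] []]; vm_compute. Qed.

Lemma transfer_ortho : transfer 1 =2 ortho_transfer.
Proof. by move=> [[] []] [[] []]; vm_compute. Qed.

Lemma pseq_rec : [/\ pseq 1 = 5, pseq 2 = 25 &
  forall k, pseq k.+3 + 4 * pseq k.+1 = 5 * pseq k.+2 + 4 * pseq k].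
Proof.
have pE k : pseq k = count_words 3 k (false, false) by exact: chain_count.
have coef t : lin_comb [:: 0; 4; 0; 1] (fun i => mat_pow para_transfer i (false, false) t)
            = lin_comb [:: 4; 0; 5] (fun i => mat_pow para_transfer i (false, false) t).
  by case: t => [[] []]; rewrite /lin_comb unlock; vm_compute.
split; try by rewrite pE (count_words_pow _ _ transfer_para) unlock; vm_compute.
move=> k; rewrite !pE; have := count_words_recurrence transfer_para coef k.
by rewrite /lin_comb unlock /= !addSn !add0n; lia.
Qed.

Lemma mseq_rec : [/\ mseq 1 = 5, mseq 2 = 25 &
  forall k, mseq k.+3 + 3 * mseq k.+1 = 6 * mseq k.+2 + 2 * mseq k].
Proof.
have mE k : mseq k = count_words 2 k (false, false) by exact: chain_count.
have coef t : lin_comb [:: 0; 3; 0; 1] (fun i => mat_pow meta_transfer i (false, false) t)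
            = lin_comb [:: 2; 0; 6] (fun i => mat_pow meta_transfer i (false, false) t).
  by case: t => [[] []]; rewrite /lin_comb unlock; vm_compute.
split; try by rewrite mE (count_words_pow _ _ transfer_meta) unlock; vm_compute.
move=> k; rewrite !mE; have := count_words_recurrence transfer_meta coef k.
by rewrite /lin_comb unlock /= !addSn !add0n; lia.
Qed.

Lemma oseq_rec : [/\ oseq 1 = 5, oseq 2 = 25 &
  forall k, oseq k.+3 = 4 * oseq k.+2 + 4 * oseq k.+1 + oseq k].
Proof.
have oE k : oseq k = count_words 1 k (false, false) by exact: chain_count.
have coef t : lin_comb [:: 0; 0; 0; 1] (fun i => mat_pow ortho_transfer i (false, false) t)
            = lin_comb [:: 1; 4; 4] (fun i => mat_pow ortho_transfer i (false, false) t).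
  by case: t => [[] []]; rewrite /lin_comb unlock; vm_compute.
split; try by rewrite oE (count_words_pow _ _ transfer_ortho) unlock; vm_compute.
move=> k; rewrite !oE; have := count_words_recurrence transfer_ortho coef k.
by rewrite /lin_comb unlock /= !addSn !add0n; lia.
Qed.

Lemma forall_ge3 (P : nat -> Prop) : (forall k, P k.+3) -> forall n, 3 <= n -> P n.
Proof. by move=> P3 [|[|[|n]]]. Qed.

Import GRing.Theory.
Local Open Scope ring_scope.

Theorem corollary3p5 :
  [/\ pseq 0 = 1%N, pseq 1 = 5%N, pseq 2 = 25%N &
      forall n : nat, (3 <= n)%N ->
        (pseq n)%:Z = 5 * (pseq (n - 1)%N)%:Z - 4 * (pseq (n - 2)%N)%:Z + 4 * (pseq (n - 3)%N)%:Z]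
  /\
  [/\ mseq 0 = 1%N, mseq 1 = 5%N, mseq 2 = 25%N &
      forall n : nat, (3 <= n)%N ->
        (mseq n)%:Z = 6 * (mseq (n - 1)%N)%:Z - 3 * (mseq (n - 2)%N)%:Z + 2 * (mseq (n - 3)%N)%:Z]
  /\
  [/\ oseq 0 = 1%N, oseq 1 = 5%N, oseq 2 = 25%N &
      forall n : nat, (3 <= n)%N ->
        (oseq n)%:Z = 4 * (oseq (n - 1)%N)%:Z + 4 * (oseq (n - 2)%N)%:Z + (oseq (n - 3)%N)%:Z].
Proof.
have [p1 p2 prec] := pseq_rec.
have [m1 m2 mrec] := mseq_rec.
have [o1 o2 orec] := oseq_rec.
split; [|split];
  (split; [reflexivity | | | apply: forall_ge3 => k; rewrite !subSS !subn0]).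
- exact: p1.
- exact: p2.
- by have := prec k; lia.
- exact: m1.
- exact: m2.
- by have := mrec k; lia.
- exact: o1.
- exact: o2.
- by have := orec k; lia.
Qed.
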